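(* There exist constants $\beta\in(0,1)$, $C>0$ and $c>0$ such that for every $m>0$, every odd $n\ge5$, every $\epsilon\in(0,1)$ with $n\epsilon\ge C$, and every $\epsilon$-differentially private mechanism $\mathcal{M}:V^n\to V$, there is some $D\in\mathcal{CTM}$ with $$\mathrm{FAIR}(D,\mathcal{M}(D))\ge c\,\frac{m}{n\epsilon}\ln\frac1\beta$$ with probability at least $\beta$.
   Context: $V=[-m/2,m/2]$. A dataset is $D=(x_1,\dots,x_n)\in V^n$ (a multiset), indexed so that $x_1\le\dots\le x_n$, with median (optimal location) $\mathcal{T}(D)=x_{\lceil n/2\rceil}$. $\mathrm{FAIR}(D,\ell)=\max_{1\le i\le n}\left(|x_i-\ell|-|x_i-\mathcal{T}(D)|\right)$. $\mathcal{CTM}$ is the set of datasets with $|x_{i+1}-x_i|\ge|x_{j+1}-x_j|$ for all $1\le i<j\le\lceil n/2\rceil-1$ and $|x_i-x_{i-1}|\ge|x_j-x_{j-1}|$ for all $\lceil n/2\rceil+1\le j<i\le n$. Two datasets are neighboring if, as multisets, they differ in exactly one element; $\mathcal{M}$ is $\epsilon$-differentially private if $\Pr[\mathcal{M}(D)\in S]\le e^{\epsilon}\Pr[\mathcal{M}(D')\in S]$ for all neighboring $D,D'$ and measurable $S\subseteq V$. *)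

From HB Require Import structures.
From mathcomp Require Import all_boot all_order all_algebra.
From mathcomp Require Import all_classical all_reals all_analysis.
Set Implicit Arguments. Unset Strict Implicit. Unset Printing Implicit Defensive.
Import Order.TTheory GRing.Theory Num.Theory.
Local Open Scope classical_set_scope.
Local Open Scope ring_scope.

Section Defs.
Variable R : realType.

Definition inV (m : R) (x : R) : Prop := - (m / 2) <= x <= m / 2.
Definition Vset (m : R) : set R := [set x | inV m x].

(* D is a multiset of n points of V, represented by a sequence *)
Definition dataset_in (m : R) (D : seq R) : Prop := forall x, x \in D -> inV m x.

(* x_1 <= ... <= x_n : the sorted version of D; index k (0-based) is x_{k+1} *)
Definition xs (D : seq R) : seq R := sort <=%R D.
Definition xi (D : seq R) (k : nat) : R := nth 0 (xs D) k.

Definition medidx (n : nat) : nat := (n.+1)./2.   (* = ceil(n/2), 1-based *)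
Definition median (D : seq R) : R := xi D (medidx (size D)).-1.

Definition FAIR (D : seq R) (l : R) : R :=
  let g := fun x => `|x - l| - `|x - median D| in
  match D with
  | [::] => 0
  | x :: D' => foldr (fun y a => Num.max (g y) a) (g x) D'
  end.

Definition x1 (D : seq R) (i : nat) : R := xi D i.-1.
Definition CTM (D : seq R) : Prop :=
  let n := size D in let k := medidx n in
  (forall i j : nat, (1 <= i)%N -> (i < j)%N -> (j <= k.-1)%N ->
      `|x1 D j.+1 - x1 D j| <= `|x1 D i.+1 - x1 D i|) /\
  (forall i j : nat, (k.+1 <= j)%N -> (j < i)%N -> (i <= n)%N ->
      `|x1 D j - x1 D j.-1| <= `|x1 D i - x1 D i.-1|).

Definition neighboring (D D' : seq R) : Prop :=
  exists (x y : R) (S : seq R), x != y /\ perm_eq D (x :: S) /\ perm_eq D' (y :: S).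

(* A (randomized) mechanism V^n -> V: to each dataset of n points of V,
   a probability distribution (Borel) on R, supported on V, depending only
   on the multiset D. *)
Definition mechanism (m : R) (n : nat) (M : n.-tuple R -> probability R R) : Prop :=
  (forall D : n.-tuple R, dataset_in m D -> M D (Vset m) = 1%E) /\
  (forall D D' : n.-tuple R, dataset_in m D -> dataset_in m D' ->
      perm_eq D D' -> M D = M D').

Definition eps_DP (m : R) (n : nat) (eps : R) (M : n.-tuple R -> probability R R) : Prop :=
  forall D D' : n.-tuple R, dataset_in m D -> dataset_in m D' -> neighboring D D' ->
  forall S : set R, measurable S -> S `<=` Vset m ->
    (M D S <= (expR eps)%:E * M D' S)%E.

End Defs.

From HB Require Import structures.
From mathcomp Require Import all_boot all_order all_algebra.
From mathcomp Require Import all_classical all_reals all_analysis.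
From mathcomp Require Import zify ring lra.
Set Implicit Arguments. Unset Strict Implicit. Unset Printing Implicit Defensive.
Import Order.TTheory GRing.Theory Num.Theory.
Local Open Scope classical_set_scope.
Local Open Scope ring_scope.

(* Put n equally spaced points, with gap m/(2n), inside V and slide this window by
   k = floor(1/eps) steps.  Each step changes a single point, so by group privacy the
   output distributions on the first and the last window differ by a factor at most
   e^(k eps) <= e <= 4 on V.  Both windows are in CTM (their gaps are constant) and the
   FAIR loss of an output is its distance to the window's median; the two medians are
   k m/(2n) >= m/(4 n eps) apart, so the balls of radius t = m ln 5/(32 n eps) around
   them are disjoint.  If the mechanism put mass > 4/5 in both balls, the first ball
   would carry mass > 4/5 under the first window, yet at most 4 times its mass < 1/5
   under the last window. *)

Section FoldrMax.
Variables (T : eqType) (R : realDomainType) (g : T -> R).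

Lemma foldr_max_le x s B : (forall y, y \in x :: s -> g y <= B) ->
  foldr (fun y a => Num.max (g y) a) (g x) s <= B.
Proof.
elim: s => [|y s IHs] gB /=; first by rewrite gB ?mem_head.
rewrite ge_max gB ?inE ?eqxx ?orbT //=; apply: IHs => z.
by rewrite inE => /orP[/eqP->|zs]; rewrite gB // !inE ?eqxx ?zs ?orbT.
Qed.

Lemma le_foldr_max x s y : y \in x :: s ->
  g y <= foldr (fun y a => Num.max (g y) a) (g x) s.
Proof.
elim: s y => [|z s IHs] y /=; first by rewrite inE => /eqP->.
rewrite !inE le_max => /or3P[/eqP->|/eqP->|ys]; rewrite ?lexx ?orbT //.
- by rewrite IHs ?mem_head ?orbT.
- by rewrite IHs ?inE ?ys ?orbT.
Qed.

End FoldrMax.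

Lemma medidx_gt0 n : (0 < n)%N -> (0 < medidx n)%N.
Proof. rewrite /medidx; lia. Qed.

Lemma medidx_le n : (medidx n <= n)%N.
Proof. rewrite /medidx; lia. Qed.

Section Fairness.
Variable R : realType.
Implicit Types (D : seq R) (l t : R).

Lemma median_mem D : D != [::] -> median D \in D.
Proof.
move=> D0; rewrite /median /xi -(mem_sort <=%R) /xs; apply: mem_nth.
rewrite size_sort; have := medidx_le (size D).
have := @medidx_gt0 (size D); rewrite lt0n size_eq0 D0 => /(_ isT).
by case: medidx.
Qed.

(* Triangle inequality: no point of [D] gains more than [|l - median D|];
   the median itself gains exactly that. *)
Lemma FAIRE D l : D != [::] -> FAIR D l = `|l - median D|.
Proof.
case: D => [//|x s] _; have med_mem : median (x :: s) \in x :: s by exact: median_mem.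
rewrite /FAIR; apply/eqP; rewrite eq_le; apply/andP; split.
  apply: foldr_max_le => y _; have := ler_distD (median (x :: s)) y l.
  rewrite (distrC (median _) l); lra.
have := le_foldr_max (fun y => `|y - l| - `|y - median (x :: s)|) med_mem.
by rewrite subrr normr0 subr0 distrC.
Qed.

Lemma FAIR_ge_setE D t : D != [::] ->
  [set l | t <= FAIR D l] = ~` [set` `]median D - t, median D + t[].
Proof.
move=> D0; apply/seteqP; split => l /=; rewrite FAIRE // in_itv /= -ltr_distl;
  by rewrite leNgt => /negP.
Qed.

Lemma CTM_const_gaps D d :
  (forall i, (0 < i < size D)%N -> `|x1 D i.+1 - x1 D i| = d) -> CTM D.
Proof.
move=> gapD; rewrite /CTM /=; have := medidx_le (size D).
split=> [i j ? ? ?|[|i] [|j] ? ? ?] /=; try lia.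
all: by rewrite !gapD ?lexx //; lia.
Qed.

End Fairness.

Section Grid.
Variables (R : realFieldType) (m : R) (n : nat).
Hypotheses (m_gt0 : 0 < m) (n_gt0 : (0 < n)%N).

Definition grid (j : nat) : R := - (m / 2) + j%:R * (m / (2 * n%:R)).

Lemma grid_step_gt0 : 0 < m / (2 * n%:R).
Proof. by rewrite divr_gt0 // mulr_gt0 // ltr0n. Qed.

Lemma grid_addn a j : grid (a + j) - grid j = a%:R * (m / (2 * n%:R)).
Proof. rewrite /grid natrD; ring. Qed.

Lemma ltr_grid : {mono grid : j k / (j < k)%N >-> j < k}.
Proof. by move=> j k; rewrite /grid ltrD2l ltr_pM2r ?ltr_nat // grid_step_gt0. Qed.

Lemma ler_grid : {mono grid : j k / (j <= k)%N >-> j <= k}.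
Proof. by move=> j k; rewrite /grid lerD2l ler_pM2r ?ler_nat // grid_step_gt0. Qed.

Lemma grid_bound j : (j <= 2 * n)%N -> - (m / 2) <= grid j <= m / 2.
Proof.
move=> j_le; have s_gt0 := grid_step_gt0.
rewrite /grid lerDl mulr_ge0 ?(ltW s_gt0) //=.
have : j%:R * (m / (2 * n%:R)) <= (2 * n)%:R * (m / (2 * n%:R)).
  by rewrite ler_pM2r ?ler_nat.
rewrite [X in _ <= X -> _]mulrCA natrM divff ?mulr1; first lra.
by rewrite mulf_neq0 // pnatr_eq0 -lt0n.
Qed.

End Grid.

Section Window.
Variables (R : realType) (m : R) (n : nat).
Hypotheses (m_gt0 : 0 < m) (n_gt0 : (0 < n)%N).

Definition window (a : nat) : n.-tuple R := [tuple of map (grid m n) (iota a n)].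

Lemma sort_window a : xs (window a) = window a.
Proof.
rewrite /xs sort_le_id // (homo_sorted _ _ (iota_sorted a n)) // => j k.
by rewrite ler_grid.
Qed.

Lemma xi_window a j : (j < n)%N -> xi (window a) j = grid m n (a + j).
Proof. by move=> j_lt; rewrite /xi sort_window (nth_map 0%N) ?nth_iota ?size_iota. Qed.

Lemma median_window a : median (window a) = grid m n (a + (medidx n).-1).
Proof.
rewrite /median size_tuple xi_window //.
by have := medidx_le n; have := medidx_gt0 n_gt0; case: medidx.
Qed.

Lemma CTM_window a : CTM (window a).
Proof.
apply: (@CTM_const_gaps _ _ (m / (2 * n%:R))) => -[//|i].
rewrite size_tuple /x1 /= => i_lt; rewrite !xi_window ?(ltnW i_lt) //.
by rewrite addnS -add1n grid_addn mul1r gtr0_norm ?grid_step_gt0.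
Qed.

Lemma window_in a : (a <= n)%N -> dataset_in m (window a).
Proof.
move=> a_le x /mapP[j]; rewrite mem_iota => /andP[_ j_lt] ->.
by apply: grid_bound => //; lia.
Qed.

(* Sliding the window one step replaces its lowest point by a new top point. *)
Lemma window_neighboring a : neighboring (window a) (window a.+1).
Proof.
have [k n_eq] : exists k, n = k.+1 by exists n.-1; rewrite prednK.
exists (grid m n a), (grid m n (a.+1 + k)), (map (grid m n) (iota a.+1 k)).
split; first by rewrite lt_eqF // ltr_grid //; lia.
have iota_bot : iota a n = a :: iota a.+1 k by rewrite n_eq.
have iota_top : iota a.+1 n = rcons (iota a.+1 k) (a.+1 + k).
  by rewrite n_eq -[k.+1]addn1 iotaD cats1.
by rewrite /= iota_bot iota_top map_rcons perm_rcons; split.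
Qed.

End Window.

Lemma probability_EFin d (T : measurableType d) (R : realType) (P : probability T R)
    (A : set T) :
  measurable A -> exists2 r : R, P A = r%:E & 0 <= r <= 1.
Proof.
move=> mA; have PA_ge0 : (0 <= P A)%E by exact: measure_ge0.
have PA_le1 := probability_le1 P mA.
case PA : (P A) => [r| |]; rewrite PA in PA_ge0 PA_le1 => //.
by exists r; rewrite // -!lee_fin PA_ge0.
Qed.

Lemma dominated_separation d (T : measurableType d) (R : realType) (P Q : probability T R)
    (V I J : set T) (K beta : R) :
  measurable V -> measurable I -> measurable J -> P V = 1%E -> I `<=` ~` J ->
  0 <= K -> (1 + K) * beta <= 1 ->
  (forall S, measurable S -> S `<=` V -> (P S <= K%:E * Q S)%E) ->
  (beta%:E <= P (~` I))%E \/ (beta%:E <= Q (~` J))%E.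
Proof.
move=> mV mI mJ PV IJ K_ge0 beta_le PKQ.
have [|PCI_lt] := leP beta%:E (P (~` I)); first by left.
have [|QCJ_lt] := leP beta%:E (Q (~` J)); first by right.
exfalso; rewrite !probability_setC // in PCI_lt QCJ_lt.
have mIV : measurable (I `&` V) by exact: measurableI.
have PI_IV : (P I <= P (I `&` V))%E.
  have mCV : measurable (~` V) by exact: measurableC.
  have PCV0 : P (~` V) = 0%E by rewrite probability_setC // PV subee.
  rewrite -[P (I `&` V)]adde0 -PCV0 (le_trans _ (measureU2 P mIV mCV)) //.
  apply: le_measure; rewrite ?inE //; first exact: measurableU.
  by move=> x Ix; have [Vx|nVx] := pselect (V x); [left | right].
have QIV_J : (Q (I `&` V) <= Q (~` J))%E.
  by apply: le_measure; rewrite ?inE //; [exact: measurableC | move=> x [/IJ]].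
have := PKQ _ mIV (@subIsetr _ _ _).
have [p Pp _] := probability_EFin P mI; have [q Qq q01] := probability_EFin Q mIV.
have [r Pr _] := probability_EFin P mIV; have [s Qs _] := probability_EFin Q mJ.
rewrite probability_setC // in QIV_J.
move: PCI_lt QCJ_lt PI_IV QIV_J; rewrite Pp Qq Pr Qs -!EFinB -EFinM !lte_fin !lee_fin.
case/andP: q01 => q_ge0 _; nra.
Qed.

Lemma group_privacy (R : realType) (m eps : R) n (M : n.-tuple R -> probability R R)
    (D : nat -> n.-tuple R) k :
  eps_DP m eps M -> (forall i, (i <= k)%N -> dataset_in m (D i)) ->
  (forall i, (i < k)%N -> neighboring (D i) (D i.+1)) ->
  forall S, measurable S -> S `<=` Vset m ->
  (M (D 0%N) S <= (expR (k%:R * eps))%:E * M (D k) S)%E.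
Proof.
move=> DP + + S mS SV; elim: k => [|k IHk] D_in D_nb.
  by rewrite mul0r expR0 mul1e.
apply: le_trans (IHk (fun i ik => D_in i (leqW ik)) (fun i ik => D_nb i (leqW ik))) _.
rewrite -natr1 mulrDl mul1r expRD EFinM -muleA lee_wpmul2l ?lee_fin ?expR_ge0 //.
by apply: DP => //; [exact: D_in (ltnW _) | exact: D_in | exact: D_nb].
Qed.

Lemma truncn_invr_mul (R : archiRealFieldType) (eps : R) : 0 < eps -> eps <= 1 ->
  2^-1 <= (Num.truncn eps^-1)%:R * eps <= 1.
Proof.
move=> eps_gt0 eps_le1; have inv_ge0 : 0 <= eps^-1 by rewrite invr_ge0 ltW.
have /andP[k_le k_gt] := truncn_itv inv_ge0.
have k_ge1 : 1 <= (Num.truncn eps^-1)%:R :> R.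
  by rewrite ler1n truncn_ge_nat // invf_ge1.
have epsV : eps * eps^-1 = 1 by rewrite divff // gt_eqF.
rewrite -natr1 in k_gt; apply/andP; split; nra.
Qed.

Lemma expR1_le4 (R : realType) : expR (1 : R) <= 4.
Proof.
have half_gt0 := expR_gt0 (2^-1 : R).
have halfN_ge := expR_ge1Dx (- (2^-1 : R)).
have halfNK : expR (2^-1 : R) * expR (- 2^-1) = 1 by rewrite -expRD subrr expR0.
have half_le2 : expR (2^-1 : R) <= 2 by nra.
by rewrite [X in expR X](splitr (1 : R)) mul1r expRD; nra.
Qed.

Lemma ln5_le4 (R : realType) : ln (5 : R) <= 4.
Proof. by rewrite -ler_expR lnK ?posrE // (le_trans _ (expR_ge1Dx 4)) // lerDl. Qed.

Lemma measurable_Vset (R : realType) (m : R) : measurable (Vset m).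
Proof.
rewrite (_ : Vset m = [set` `[- (m / 2), m / 2]]); first exact: measurable_itv.
by apply/seteqP; split.
Qed.

Lemma exists_CTM_dataset_FAIR_ge (R : realType) (m eps t : R) n k
    (M : n.-tuple R -> probability R R) :
  0 < m -> (0 < n)%N -> (k <= n)%N -> k%:R * eps <= 1 ->
  2 * t <= k%:R * (m / (2 * n%:R)) -> mechanism m M -> eps_DP m eps M ->
  exists D : n.-tuple R, dataset_in m D /\ CTM D /\
    ((5^-1)%:E <= M D [set l | (t <= FAIR D l)%R])%E.
Proof.
move=> m_gt0 n_gt0 k_le_n k_eps t_le [M_supp _] M_DP.
pose ball a := [set` `]median (window m n a) - t, median (window m n a) + t[].
have windows_in a : (a <= k)%N -> dataset_in m (window m n a).
  by move=> a_le; apply: window_in => //; exact: leq_trans k_le_n.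
have far_window a : (a <= k)%N -> ((5^-1)%:E <= M (window m n a) (~` ball a))%E ->
    exists D : n.-tuple R, dataset_in m D /\ CTM D /\
      ((5^-1)%:E <= M D [set l | (t <= FAIR D l)%R])%E.
  move=> a_le far; exists (window m n a); split; first exact: windows_in.
  by split; [exact: CTM_window | rewrite FAIR_ge_setE // -size_eq0 size_tuple -lt0n].
have [far0|fark] : ((5^-1)%:E <= M (window m n 0) (~` ball 0%N))%E \/
                   ((5^-1)%:E <= M (window m n k) (~` ball k))%E.
  apply: (@dominated_separation _ _ _ _ _ (Vset m) _ _ (expR (k%:R * eps))).
  - exact: measurable_Vset.
  - exact: measurable_itv.
  - exact: measurable_itv.
  - exact/M_supp/windows_in.
  - move=> l; rewrite /ball /= !in_itv /= !median_window // add0n.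
    by have := grid_addn m n k (medidx n).-1; lra.
  - exact: expR_ge0.
  - have : expR (k%:R * eps) <= expR 1 by rewrite ler_expR.
    by have := expR1_le4 R; lra.
  - by apply: group_privacy => // i i_lt; exact: window_neighboring.
- exact: (far_window 0%N).
- exact: (far_window k).
Qed.

Theorem theorem7p21 (R : realType) :
  exists (beta C c : R), 0 < beta < 1 /\ 0 < C /\ 0 < c /\
  forall (m : R) (n : nat) (eps : R), 0 < m -> odd n -> (5 <= n)%N ->
    0 < eps < 1 -> C <= n%:R * eps ->
    forall M : n.-tuple R -> probability R R,
      mechanism m M -> eps_DP m eps M ->
      exists D : n.-tuple R, dataset_in m D /\ CTM D /\
        (beta%:E <= M D [set l : R | (c * (m / (n%:R * eps)) * ln (beta^-1) <= FAIR D l)%R])%E.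
Proof.
exists 5^-1, 2, 32^-1; split; [lra | split; [lra | split; [lra |]]].
move=> m n eps m_gt0 _ n_ge5 /andP[eps_gt0 eps_lt1] n_eps M M_mech M_DP.
have /andP[k_eps_ge k_eps_le] := truncn_invr_mul eps_gt0 (ltW eps_lt1).
rewrite invrK.
apply: (exists_CTM_dataset_FAIR_ge (eps := eps) (k := Num.truncn eps^-1)) => //.
- lia.
- by rewrite -(ler_nat R); nra.
- have u_gt0 : 0 < m / (n%:R * eps) by rewrite divr_gt0 // mulr_gt0 // ltr0n; lia.
  have -> : m / (2 * n%:R) = eps * (m / (n%:R * eps)) / 2.
    by field; rewrite !gt_eqF ?ltr0n //; lia.
  by have := ln5_le4 R; nra.
Qed.
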